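(* For every integer $n\ge0$, $$7J\mathcal{G}_{n}^{(3)}+K\mathcal{G}_{n}^{(3)}=3\cdot2^{n}\Theta+X_{n}(\mathbf{A}+\mathbf{C})-X_{n+1}(\mathbf{B}+\mathbf{D})$$ and $$7J\mathcal{G}_{n}^{(3)}-K\mathcal{G}_{n}^{(3)}=2^{n}\Theta+X_{n}(\mathbf{A}-\mathbf{C})-X_{n+1}(\mathbf{B}-\mathbf{D}),$$ where $\Theta=1+2\mathbf{e}_1+4\mathbf{e}_2+8\mathbf{e}_3$, $\mathbf{A}=1+2\mathbf{e}_1-3\mathbf{e}_2+\mathbf{e}_3$, $\mathbf{B}=2-3\mathbf{e}_1+\mathbf{e}_2+2\mathbf{e}_3$, $\mathbf{C}=1-2\mathbf{e}_1+\mathbf{e}_2+\mathbf{e}_3$, $\mathbf{D}=-2+\mathbf{e}_1+\mathbf{e}_2-2\mathbf{e}_3$.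
   Context: Fix real numbers $\lambda_1,\lambda_2,\lambda_3$. The algebra $\mathbb{H}_{\lambda_1,\lambda_2,\lambda_3}$ of 3-parameter generalized quaternions is the real associative algebra of elements $\psi_0+\psi_1\mathbf{e}_1+\psi_2\mathbf{e}_2+\psi_3\mathbf{e}_3$ ($\psi_i\in\mathbb{R}$) with $\mathbf{e}_1^2=-\lambda_1\lambda_2$, $\mathbf{e}_2^2=-\lambda_1\lambda_3$, $\mathbf{e}_3^2=-\lambda_2\lambda_3$, $\mathbf{e}_1\mathbf{e}_2=-\mathbf{e}_2\mathbf{e}_1=\lambda_1\mathbf{e}_3$, $\mathbf{e}_1\mathbf{e}_3=-\mathbf{e}_3\mathbf{e}_1=-\lambda_2\mathbf{e}_2$, $\mathbf{e}_2\mathbf{e}_3=-\mathbf{e}_3\mathbf{e}_2=\lambda_3\mathbf{e}_1$. The third-order Jacobsthal numbers are $J_0^{(3)}=0$, $J_1^{(3)}=J_2^{(3)}=1$, $J_n^{(3)}=J_{n-1}^{(3)}+J_{n-2}^{(3)}+2J_{n-3}^{(3)}$ for $n\ge3$; the modified third-order Jacobsthal numbers are $K_0^{(3)}=3$, $K_1^{(3)}=1$, $K_2^{(3)}=3$, $K_n^{(3)}=K_{n-1}^{(3)}+K_{n-2}^{(3)}+2K_{n-3}^{(3)}$ for $n\ge3$. For $n\ge0$ define $J\mathcal{G}_n^{(3)}=J_n^{(3)}+J_{n+1}^{(3)}\mathbf{e}_1+J_{n+2}^{(3)}\mathbf{e}_2+J_{n+3}^{(3)}\mathbf{e}_3$ and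 $K\mathcal{G}_n^{(3)}=K_n^{(3)}+K_{n+1}^{(3)}\mathbf{e}_1+K_{n+2}^{(3)}\mathbf{e}_2+K_{n+3}^{(3)}\mathbf{e}_3$. The integer sequence $X_n$ is defined by $X_n=0,1,-1$ according as $n\equiv0,1,2\pmod 3$. *)

From mathcomp Require Import all_boot all_order all_algebra.
From mathcomp Require Import reals.
Set Implicit Arguments. Unset Strict Implicit. Unset Printing Implicit Defensive.
Import Order.TTheory GRing.Theory Num.Theory.
Local Open Scope ring_scope.

(* 3-parameter generalized quaternions over R:  q0 + q1 e1 + q2 e2 + q3 e3.
   The underlying real vector space does not depend on the parameters;
   only the multiplication does. *)
Record gquat (R : Type) := GQ { gq0 : R; gq1 : R; gq2 : R; gq3 : R }.

Section GQ.
Variable R : realType.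

Definition gqadd (p q : gquat R) : gquat R :=
  GQ (gq0 p + gq0 q) (gq1 p + gq1 q) (gq2 p + gq2 q) (gq3 p + gq3 q).
Definition gqopp (p : gquat R) : gquat R :=
  GQ (- gq0 p) (- gq1 p) (- gq2 p) (- gq3 p).
Definition gqsub (p q : gquat R) : gquat R := gqadd p (gqopp q).
Definition gqscale (r : R) (p : gquat R) : gquat R :=
  GQ (r * gq0 p) (r * gq1 p) (r * gq2 p) (r * gq3 p).

(* Multiplication of H_{l1,l2,l3}:
   e1^2=-l1 l2, e2^2=-l1 l3, e3^2=-l2 l3,
   e1e2=-e2e1=l1 e3, e1e3=-e3e1=-l2 e2, e2e3=-e3e2=l3 e1. *)
Definition gqmul (l1 l2 l3 : R) (p q : gquat R) : gquat R :=
  let a0 := gq0 p in let a1 := gq1 p in let a2 := gq2 p in let a3 := gq3 p in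
  let b0 := gq0 q in let b1 := gq1 q in let b2 := gq2 q in let b3 := gq3 q in
  GQ (a0 * b0 - l1 * l2 * a1 * b1 - l1 * l3 * a2 * b2 - l2 * l3 * a3 * b3)
     (a0 * b1 + a1 * b0 + l3 * (a2 * b3 - a3 * b2))
     (a0 * b2 + a2 * b0 + l2 * (a3 * b1 - a1 * b3))
     (a0 * b3 + a3 * b0 + l1 * (a1 * b2 - a2 * b1)).
End GQ.

Fixpoint J3 (n : nat) : nat :=
  match n with
  | 0 => 0%N | 1 => 1%N | 2 => 1%N
  | S (S (S m as p) as q) => (J3 q + J3 p + 2 * J3 m)%N
  end.

Fixpoint K3 (n : nat) : nat :=
  match n with
  | 0 => 3%N | 1 => 1%N | 2 => 3%N
  | S (S (S m as p) as q) => (K3 q + K3 p + 2 * K3 m)%N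
  end.

Definition Xseq (n : nat) : int :=
  match (n %% 3)%N with 0 => 0 | 1 => 1 | _ => -1 end.

Definition JG (R : realType) (n : nat) : gquat R :=
  GQ (J3 n)%:R (J3 n.+1)%:R (J3 n.+2)%:R (J3 n.+3)%:R.
Definition KG (R : realType) (n : nat) : gquat R :=
  GQ (K3 n)%:R (K3 n.+1)%:R (K3 n.+2)%:R (K3 n.+3)%:R.

Definition Theta (R : realType) : gquat R := GQ 1 2 4 8.
Definition gqA (R : realType) : gquat R := GQ 1 2 (-3) 1.
Definition gqB (R : realType) : gquat R := GQ 2 (-3) 1 2.
Definition gqC (R : realType) : gquat R := GQ 1 (-2) 1 1.
Definition gqD (R : realType) : gquat R := GQ (-2) 1 1 (-2).

(** Both Jacobsthal-type sequences satisfy [u (n+3) = u (n+2) + u (n+1) + 2 u n],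
    whose characteristic polynomial [x^3 - x^2 - x - 2 = (x - 2)(x^2 + x + 1)] has
    the root [2] and the primitive cube roots of unity.  The solution space is
    therefore spanned by [2^n], [X n] and [X (n+1)], which gives the Binet forms
    [7 J n = 2^(n+1) + X n - 2 X (n+1)] and [K n = 2^n + X n + 2 X (n+1)].
    The theorem is these two formulas read off coordinatewise, after reducing
    [X (n+2)], [X (n+3)] and [X (n+4)] to [X n] and [X (n+1)]; only the linear
    structure of the quaternions is involved. *)
From mathcomp Require Import all_boot all_order all_algebra.
From mathcomp Require Import reals.
From mathcomp Require Import ring.
Import GRing.Theory.
Local Open Scope ring_scope.

Lemma XseqS3 n : Xseq n.+3 = Xseq n.
Proof. by rewrite /Xseq -addn3 modnDr. Qed.

Lemma XseqSS n : Xseq n.+2 = - Xseq n - Xseq n.+1.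
Proof.
rewrite /Xseq -[n.+2]addn2 -modnDml -[n.+1]addn1 -(modnDml n 1).
by case: (n %% 3)%N (ltn_pmod n (isT : (0 < 3)%N)) => [|[|[|]]].
Qed.

Section JacobsthalRecurrence.
Variable R : comPzRingType.

Definition jacobsthal_rec (u : nat -> R) :=
  forall n, u n.+3 = u n.+2 + u n.+1 + 2 * u n.

Lemma jacobsthal_rec_eq (u v : nat -> R) :
  jacobsthal_rec u -> jacobsthal_rec v ->
  u 0%N = v 0%N -> u 1%N = v 1%N -> u 2%N = v 2%N -> u =1 v.
Proof.
move=> ru rv e0 e1 e2 n.
suff [] : [/\ u n = v n, u n.+1 = v n.+1 & u n.+2 = v n.+2] by [].
elim: n => [|n [en en1 en2]]; first by split.
by split; rewrite // ru rv en en1 en2.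
Qed.

Lemma jacobsthal_rec_J3 : jacobsthal_rec (fun n => (J3 n)%:R).
Proof.
move=> n; rewrite (_ : J3 n.+3 = J3 n.+2 + J3 n.+1 + 2 * J3 n)%N //.
by rewrite natrD natrM natrD.
Qed.

Lemma jacobsthal_rec_K3 : jacobsthal_rec (fun n => (K3 n)%:R).
Proof.
move=> n; rewrite (_ : K3 n.+3 = K3 n.+2 + K3 n.+1 + 2 * K3 n)%N //.
by rewrite natrD natrM natrD.
Qed.

Lemma XseqSS_intr n :
  (Xseq n.+2)%:~R = - (Xseq n)%:~R - (Xseq n.+1)%:~R :> R.
Proof. by rewrite XseqSS rmorphB rmorphN. Qed.

Lemma J3_binet n :
  7 * (J3 n)%:R = 2 ^+ n.+1 + (Xseq n)%:~R - 2 * (Xseq n.+1)%:~R :> R.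
Proof.
move: n; apply: jacobsthal_rec_eq => [m|m|||] /=.
- by rewrite jacobsthal_rec_J3; ring.
- by rewrite !XseqS3 !XseqSS_intr !exprS; ring.
all: by rewrite /Xseq /=; ring.
Qed.

Lemma K3_binet n :
  (K3 n)%:R = 2 ^+ n + (Xseq n)%:~R + 2 * (Xseq n.+1)%:~R :> R.
Proof.
move: n; apply: jacobsthal_rec_eq => [m|m|||] /=.
- exact: jacobsthal_rec_K3.
- by rewrite !XseqS3 !XseqSS_intr !exprS; ring.
all: by rewrite /Xseq /=; ring.
Qed.
End JacobsthalRecurrence.

Theorem theorem4p4 (R : realType) (l1 l2 l3 : R) (n : nat) :
  gqadd (gqscale 7 (JG R n)) (KG R n) =
    gqsub (gqadd (gqscale (3 * 2 ^+ n) (Theta R))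
                 (gqscale (Xseq n)%:~R (gqadd (gqA R) (gqC R))))
          (gqscale (Xseq n.+1)%:~R (gqadd (gqB R) (gqD R)))
  /\
  gqsub (gqscale 7 (JG R n)) (KG R n) =
    gqsub (gqadd (gqscale (2 ^+ n) (Theta R))
                 (gqscale (Xseq n)%:~R (gqsub (gqA R) (gqC R))))
          (gqscale (Xseq n.+1)%:~R (gqsub (gqB R) (gqD R))).
Proof.
rewrite /gqsub /gqadd /gqscale /gqopp /JG /KG /Theta /gqA /gqB /gqC /gqD.
rewrite !J3_binet !K3_binet !XseqS3 !XseqSS_intr !exprS.
by split; congr GQ; cbn [gq0 gq1 gq2 gq3]; ring.
Qed.
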